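(* Let $a,b,c$ be positive integers and $r=[2a,-2,-2b,2c]$. If $bc\ge 2a(c+1)$, then all zeros of $\Delta_{K(r)}(t)$ are real (i.e. $K(r)$ is stable).
   Context: For a finite sequence $r=[2a_1,2a_2,\dots,2a_n]$ of nonzero even integers, $K(r)$ denotes the 2-bridge knot or link whose associated rational number has the even continued fraction expansion $1/(2a_1-1/(2a_2-\cdots-1/(2a_n)))$ ($K(r)$ is a knot if $n$ is even and a 2-component link if $n$ is odd). Let $M(r)$ be the $n\times n$ integer matrix whose $(k,k)$-entry is $a_k$ ($1\le k\le n$), whose $(k,k+1)$-entry is $1$ ($1\le k\le n-1$), and whose other entries are $0$; it is a Seifert matrix of $K(r)$, and $\Delta_{K(r)}(t)=\det(tM(r)-M(r)^T)$ is the (reduced) Alexander polynomial of $K(r)$ (well defined up to sign). A knot or link is called stable if all zeros of its Alexander polynomial are real. *)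

From HB Require Import structures.
From mathcomp Require Import all_boot all_order all_algebra all_field.
Set Implicit Arguments. Unset Strict Implicit. Unset Printing Implicit Defensive.
Import Order.TTheory GRing.Theory Num.Theory.
Local Open Scope ring_scope.

(* For r = [2a_1; ...; 2a_n] (a list of nonzero even integers), the halved
   entries a_k = r_k / 2. *)
Definition halves (r : seq int) : seq int := [seq (x %/ 2)%Z | x <- r].

Definition seifert_mx (r : seq int) : 'M[int]_(size r) :=
  \matrix_(i < size r, j < size r)
     (if i == j then (halves r)`_i
      else if (j : nat) == i.+1 then 1 else 0).

Definition alexander_poly (r : seq int) : {poly int} :=
  \det ('X *: map_mx polyC (seifert_mx r) - map_mx polyC (seifert_mx r)^T).

Definition all_zeros_real (p : {poly int}) : Prop :=
  forall z : algC, root (map_poly intr p) z -> z \is Num.real.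

Definition stable_K (r : seq int) : Prop := all_zeros_real (alexander_poly r).

(* Expanding det(tM - M^T) for the 4x4 Seifert matrix with
   diagonal (a, -1, -b, c) gives the Alexander polynomial
       D(t) = K (t-1)^4 + L (t-1)^2 t + t^2,   K = abc,  L = ac - bc - a.
   This quartic is palindromic: for a root z (necessarily z <> 0, as
   D(0) = K > 0) the quantity w = (z-1)^2 / z satisfies K w^2 + L w + 1 = 0.
   Under the hypothesis the discriminant L^2 - 4K is nonnegative, so w is
   real, and since K > 0, L <= 0 this real root is nonnegative.  Finally z
   is a root of z^2 - (w+2) z + 1, whose discriminant w (w+4) is
   nonnegative, so z is real. *)
From mathcomp Require Import all_boot all_order all_algebra all_field.
From mathcomp Require Import ring lra.
Set Implicit Arguments. Unset Strict Implicit. Unset Printing Implicit Defensive.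
Import Order.TTheory GRing.Theory Num.Theory.
Local Open Scope ring_scope.

Definition minor_fun {R : Type} (j : nat) (f : nat -> nat -> R) (k l : nat) : R :=
  f k.+1 (bump j l).

(* Laplace expansion along the first row, for a matrix given by a formula;
   the minors are again of this form, so the lemma can be iterated. *)
Lemma det_fun_row0 (R : comPzRingType) (n : nat) (f : nat -> nat -> R) :
  \det (\matrix_(i < n.+1, j < n.+1) f i j) =
  \sum_(j < n.+1) (-1) ^+ j * f 0%N j *
     \det (\matrix_(k < n, l < n) minor_fun j f k l).
Proof.
rewrite (expand_det_row _ 0); apply: eq_bigr => j _.
rewrite /cofactor mxE mulrA [_ * (-1) ^+ _]mulrC /= add0n; congr (_ * \det _).
by apply/matrixP => k l; rewrite !mxE.
Qed.

Definition seifert_entry (h : seq int) (i j : nat) : int :=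
  if i == j then h`_i else if j == i.+1 then 1 else 0.

Definition alexander_entry (h : seq int) (i j : nat) : {poly int} :=
  'X * (seifert_entry h i j)%:P - (seifert_entry h j i)%:P.

Lemma alexander_polyE (r : seq int) :
  alexander_poly r =
  \det (\matrix_(i < size r, j < size r) alexander_entry (halves r) i j).
Proof.
rewrite /alexander_poly /seifert_mx; congr (\det _).
by apply/matrixP => i j; rewrite !mxE.
Qed.

Lemma halvesE (a b c : int) :
  halves [:: 2 * a; -2; -2 * b; 2 * c] = [:: a; -1; -b; c].
Proof. by rewrite /halves /= mulNr -mulrN !mulKz. Qed.

Lemma alexander_poly_formula (a b c : int) :
  alexander_poly [:: 2 * a; -2; -2 * b; 2 * c] =
  (a * b * c)%:P * ('X - 1) ^+ 4
  + (a * c - b * c - a)%:P * ('X - 1) ^+ 2 * 'X + 'X ^+ 2.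
Proof.
rewrite alexander_polyE halvesE /=.
rewrite !(det_fun_row0, big_ord_recl, big_ord0) det_mx00.
rewrite /minor_fun /alexander_entry /seifert_entry /bump /=.
rewrite !rmorphM !polyCN !polyC1 !polyC0.
ring.
Qed.

Lemma alexander_poly_eval (a b c : int) (z : algC) :
  (map_poly intr (alexander_poly [:: 2 * a; -2; -2 * b; 2 * c])).[z] =
  (a * b * c)%:~R * (z - 1) ^+ 4 + (a * c - b * c - a)%:~R * (z - 1) ^+ 2 * z
  + z ^+ 2.
Proof.
rewrite alexander_poly_formula.
rewrite !(rmorphD, rmorphM, rmorphXn, rmorphB, rmorph1, rmorphN1) /=.
rewrite !(map_polyC, map_polyX).
by rewrite !(hornerD, hornerM, horner_exp, hornerN, hornerX, hornerC); ring.
Qed.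

Lemma sqr_real (C : numClosedFieldType) (x d : C) :
  x ^+ 2 = d -> 0 <= d -> x \is Num.real.
Proof.
move=> x2 d_ge0.
have : (x - sqrtC d) * (x + sqrtC d) = 0 by rewrite -subr_sqr sqrtCK x2 subrr.
move/eqP; rewrite mulf_eq0 => /orP[]; [rewrite subr_eq0 | rewrite addr_eq0].
  by move/eqP ->; exact: sqrtC_real.
by move/eqP ->; rewrite rpredN sqrtC_real.
Qed.

Lemma quadratic_root_real (C : numClosedFieldType) (p q r x : C) :
  p \is Num.real -> q \is Num.real -> p != 0 -> 0 <= q ^+ 2 - 4 * p * r ->
  p * x ^+ 2 + q * x + r = 0 -> x \is Num.real.
Proof.
move=> p_real q_real p_neq0 disc_ge0 root_x.
have square_eq : (2 * p * x + q) ^+ 2 = q ^+ 2 - 4 * p * r.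
  by rewrite -[RHS]addr0 -(mulr0 (4 * p)) -root_x; ring.
have -> : x = ((2 * p * x + q) - q) / (2 * p) by field.
apply: realM; first by apply: realB => //; exact: sqr_real square_eq disc_ge0.
by rewrite rpredV; apply: realM => //; exact: realn.
Qed.

(* With p >= 0, q <= 0 and r > 0, a real root of p x^2 + q x + r is
   nonnegative: for x < 0 every term would be nonnegative and r > 0. *)
Lemma quadratic_root_ge0 (R : numDomainType) (p q r x : R) :
  0 <= p -> q <= 0 -> 0 < r -> x \is Num.real ->
  p * x ^+ 2 + q * x + r = 0 -> 0 <= x.
Proof.
move=> p_ge0 q_le0 r_gt0; rewrite realE => /orP[// | x_le0] root_x.
have : r <= p * x ^+ 2 + q * x + r.
  rewrite lerDr; apply: addr_ge0; last exact: mulr_le0.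
  by apply: mulr_ge0; rewrite // expr2 mulr_le0.
by rewrite root_x => /(lt_le_trans r_gt0); rewrite ltxx.
Qed.

(* The palindromic quartic K (z-1)^4 + L (z-1)^2 z + z^2 with K > 0, L <= 0
   and L^2 >= 4K has only real roots, via the substitution w = (z-1)^2 / z. *)
Lemma quartic_root_real (C : numClosedFieldType) (K L z : C) :
  0 < K -> L <= 0 -> 0 <= L ^+ 2 - 4 * K ->
  K * (z - 1) ^+ 4 + L * (z - 1) ^+ 2 * z + z ^+ 2 = 0 -> z \is Num.real.
Proof.
move=> K_gt0 L_le0 disc_ge0 root_z.
have z_neq0 : z != 0.
  apply/eqP => z0; have K0 : K = 0 by rewrite -root_z z0; ring.
  by rewrite K0 ltxx in K_gt0.
pose w := (z - 1) ^+ 2 / z.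
have root_w : K * w ^+ 2 + L * w + 1 = 0.
  have -> : K * w ^+ 2 + L * w + 1 =
            (K * (z - 1) ^+ 4 + L * (z - 1) ^+ 2 * z + z ^+ 2) / z ^+ 2.
    by rewrite /w; field.
  by rewrite root_z mul0r.
have w_real : w \is Num.real.
  apply: (quadratic_root_real (gtr0_real K_gt0) (ler0_real L_le0)
            (lt0r_neq0 K_gt0) _ root_w).
  by rewrite mulr1.
have w_ge0 : 0 <= w := quadratic_root_ge0 (ltW K_gt0) L_le0 ltr01 w_real root_w.
have root_z' : 1 * z ^+ 2 + (- (w + 2)) * z + 1 = 0 by rewrite /w; field.
apply: (quadratic_root_real (real1 _) _ (oner_neq0 _) _ root_z').
  by rewrite realN realD ?realn.
have -> : (- (w + 2)) ^+ 2 - 4 * 1 * 1 = w * (w + 4) by ring.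
by rewrite mulr_ge0 ?addr_ge0.
Qed.

(* For a, c >= 0 and bc >= 2a(c+1): the coefficient ac - bc - a is <= 0 and
   the discriminant (ac - bc - a)^2 - 4abc = bc (bc - 2a(c+1)) + a^2 (c-1)^2
   is >= 0. *)
Lemma coefficient_bounds (R : realDomainType) (a b c : R) :
  0 <= a -> 0 <= c -> 2 * a * (c + 1) <= b * c ->
  a * c - b * c - a <= 0 /\ 0 <= (a * c - b * c - a) ^+ 2 - 4 * (a * b * c).
Proof.
move=> a_ge0 c_ge0 hyp.
have ac_ge0 : 0 <= a * c by rewrite mulr_ge0.
split; first by nra.
have -> : (a * c - b * c - a) ^+ 2 - 4 * (a * b * c) =
          b * c * (b * c - 2 * a * (c + 1)) + (a * (c - 1)) ^+ 2 by ring.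
apply: addr_ge0; last exact: sqr_ge0.
by apply: mulr_ge0; [nra | rewrite subr_ge0].
Qed.

Theorem proposition8p1 (a b c : int) :
  0 < a -> 0 < b -> 0 < c -> 2 * a * (c + 1) <= b * c ->
  stable_K [:: 2 * a; -2; -2 * b; 2 * c].
Proof.
move=> a_gt0 b_gt0 c_gt0 hyp z; rewrite /root alexander_poly_eval => /eqP root_z.
have [L_le0 disc_ge0] := coefficient_bounds (ltW a_gt0) (ltW c_gt0) hyp.
apply: (quartic_root_real _ _ _ root_z).
- by rewrite ltr0z !mulr_gt0.
- by rewrite lerz0.
- by rewrite (_ : 4 = 4%:~R) // -rmorphXn -rmorphM -rmorphB ler0z.
Qed.
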